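(* For all $0\le t<1$ and $x\in\mathbb{R}$, $W^*(t,x)\ge h(t,x)$, where $$W^*(t,x)=\begin{cases}(1-t)^{q/2}G_q(|x|/\sqrt{1-t})\,w(A^* ), & |x|>A^*\sqrt{1-t},\\ h(t,x), & |x|\le A^*\sqrt{1-t}.\end{cases}$$
   Context: $q>0$. $F_q(y):=\int_0^\infty u^{q-1}e^{yu-u^2/2}\,\mathrm{d}u$ and $G_q(y):=F_q(-y)$. $D^*>0$ is the unique positive root of $q-D(F_q+G_q)'(D)/(F_q+G_q)(D)=0$. $\overline{U}(t,x)=(1-t)^{q/2}(D^* )^q(F_q+G_q)(x/\sqrt{1-t})/(F_q+G_q)(D^* )$ if $|x|<D^*\sqrt{1-t}$, and $|x|^q$ otherwise. $h(t,x)=\overline{U}(t,x)-|x|^q$ if $|x|<D^*\sqrt{1-t}$, and $0$ otherwise. $w(A):=\frac{1}{G_q(A)}[(D^* )^q(F_q+G_q)(A)/(F_q+G_q)(D^* )-A^q]$ for $0\le A\le D^*$. $A^*$ is the unique maximizer of $w$ over $[0,D^*]$. *)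

From Stdlib Require Import Reals.
From Coquelicot Require Import Coquelicot.
Open Scope R_scope.

(* a^p for a >= 0 and p > 0, with the convention 0^p = 0
   (Stdlib's Rpower 0 p is exp(p * ln 0) = 1, which is wrong). *)
Definition rpow (a p : R) : R := if Rle_dec a 0 then 0 else Rpower a p.

(* F_q(y) = int_0^oo u^(q-1) e^(y u - u^2/2) du  (improper at both ends,
   since u^(q-1) is unbounded near 0 when q < 1). *)
Definition Fq (q y : R) : R :=
  RInt_gen (fun u => Rpower u (q - 1) * exp (y * u - u ^ 2 / 2))
           (at_right 0) (Rbar_locally p_infty).

Definition Gq (q y : R) : R := Fq q (- y).

Definition FGq (q y : R) : R := Fq q y + Gq q y.

Definition Dstar_eq (q D : R) : Prop :=
  q - D * Derive (FGq q) D / FGq q D = 0.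

Definition Ubar (q D t x : R) : R :=
  if Rlt_dec (Rabs x) (D * sqrt (1 - t)) then
    Rpower (1 - t) (q / 2) * rpow D q * FGq q (x / sqrt (1 - t)) / FGq q D
  else rpow (Rabs x) q.

Definition hfun (q D t x : R) : R :=
  if Rlt_dec (Rabs x) (D * sqrt (1 - t)) then Ubar q D t x - rpow (Rabs x) q
  else 0.

Definition wfun (q D A : R) : R :=
  / Gq q A * (rpow D q * FGq q A / FGq q D - rpow A q).

Definition Wstar (q D A t x : R) : R :=
  if Rlt_dec (A * sqrt (1 - t)) (Rabs x) then
    Rpower (1 - t) (q / 2) * Gq q (Rabs x / sqrt (1 - t)) * wfun q D A
  else hfun q D t x.

From Stdlib Require Import Reals Lra Classical_Prop.
From Coquelicot Require Import Coquelicot.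
Open Scope R_scope.

(* Put y = |x| / sqrt(1-t).  Both sides scale like (1-t)^(q/2): where |x| < Ds sqrt(1-t)
   one has h(t,x) = (1-t)^(q/2) G_q(y) w(y), so W^* >= h because w(y) <= w(As) and
   G_q(y) > 0; elsewhere h = 0 and W^* >= 0 because w(As) >= w(Ds) = 0.
   Positivity of G_q(y) for y >= 0 needs convergence of the improper integral: its positive
   integrand is dominated by u^(q-1) near 0 and by a multiple of e^(-u) near +oo, and bounded
   monotone partial integrals converge to their supremum. *)

Lemma filterlim_sup (F : (R -> Prop) -> Prop) {FF : Filter F}
    (S : R -> Prop) (g : R -> R) (a0 M : R) :
  S a0 -> (forall a, S a -> g a <= M) ->
  (forall a, S a -> F (fun y => S y /\ g a <= g y)) ->
  exists l, filterlim g F (locally l) /\ forall a, S a -> g a <= l.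
Proof.
  intros Sa0 HM Hincr.
  set (E := fun v => exists a, S a /\ v = g a).
  destruct (completeness E) as [l [Hub Hlub]].
  - exists M. intros v [a [Sa ->]]. auto.
  - exists (g a0), a0. auto.
  - assert (HgE : forall a, S a -> g a <= l) by (intros a Sa; apply Hub; exists a; auto).
    exists l; split; [|exact HgE].
    intros P [eps HP]. change (F (fun y => P (g y))).
    assert (Hnear : exists a, S a /\ l - eps < g a).
    { apply NNPP. intros Hn.
      enough (l <= l - eps) by (destruct eps; simpl in *; lra).
      apply Hlub. intros v [a [Sa ->]].
      apply Rnot_lt_le. intros Hlt. apply Hn. exists a; auto. }
    destruct Hnear as [a [Sa Ha]].
    apply (filter_imp (fun y => S y /\ g a <= g y)); [|now apply Hincr].
    intros y [Sy Hy]. apply HP.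
    unfold ball; simpl; unfold AbsRing_ball, abs, minus, plus, opp; simpl.
    specialize (HgE y Sy). apply Rabs_def1; lra.
Qed.

Lemma is_RInt_gen_at_point_r (F : (R -> Prop) -> Prop) {FF : Filter F}
    (f : R -> R) (b l : R) :
  F (fun a => ex_RInt f a b) -> filterlim (fun a => RInt f a b) F (locally l) ->
  is_RInt_gen f F (at_point b) l.
Proof.
  intros Hex Hlim P HP.
  apply (Filter_prod _ _ _ (fun a => ex_RInt f a b /\ P (RInt f a b)) (fun y => y = b)).
  - apply filter_and; [exact Hex | exact (Hlim P HP)].
  - reflexivity.
  - intros a y [Ha HPa] ->. exists (RInt f a b). split; [|exact HPa].
    exact (RInt_correct f a b Ha).
Qed.

Lemma is_RInt_gen_at_point_l (F : (R -> Prop) -> Prop) {FF : Filter F}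
    (f : R -> R) (a l : R) :
  F (fun b => ex_RInt f a b) -> filterlim (fun b => RInt f a b) F (locally l) ->
  is_RInt_gen f (at_point a) F l.
Proof.
  intros Hex Hlim P HP.
  apply (Filter_prod _ _ _ (fun y => y = a) (fun b => ex_RInt f a b /\ P (RInt f a b))).
  - reflexivity.
  - apply filter_and; [exact Hex | exact (Hlim P HP)].
  - intros y b -> [Hb HPb]. exists (RInt f a b). split; [|exact HPb].
    exact (RInt_correct f a b Hb).
Qed.

Section PositiveImproperIntegral.

Variable f : R -> R.
Hypothesis f_cont : forall u, 0 < u -> continuous f u.
Hypothesis f_pos : forall u, 0 < u -> 0 < f u.

Lemma ex_RInt_pos_half_line a b : 0 < a <= b -> ex_RInt f a b.
Proof.
  intros Hab. apply (@ex_RInt_continuous R_CompleteNormedModule). intros z Hz.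
  rewrite Rmin_left, Rmax_right in Hz by lra. apply f_cont; lra.
Qed.

Lemma RInt_half_line_le_l a b c : 0 < a <= b -> b <= c -> RInt f b c <= RInt f a c.
Proof.
  intros Hab Hbc.
  rewrite <- (RInt_Chasles f a b c) by (apply ex_RInt_pos_half_line; lra).
  assert (0 <= RInt f a b).
  { apply RInt_ge_0; [lra | apply ex_RInt_pos_half_line; lra |].
    intros u Hu. apply Rlt_le, f_pos. lra. }
  simpl; unfold plus; simpl. lra.
Qed.

Lemma RInt_half_line_le_r a b c : 0 < a <= b -> b <= c -> RInt f a b <= RInt f a c.
Proof.
  intros Hab Hbc.
  rewrite <- (RInt_Chasles f a b c) by (apply ex_RInt_pos_half_line; lra).
  assert (0 <= RInt f b c).
  { apply RInt_ge_0; [lra | apply ex_RInt_pos_half_line; lra |].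
    intros u Hu. apply Rlt_le, f_pos. lra. }
  simpl; unfold plus; simpl. lra.
Qed.

Lemma is_RInt_gen_at_right_0 M :
  (forall a, 0 < a <= 1 -> RInt f a 1 <= M) ->
  exists l, 0 <= l /\ is_RInt_gen f (at_right 0) (at_point 1) l.
Proof.
  intros HM.
  destruct (filterlim_sup (at_right 0) (fun a => 0 < a <= 1) (fun a => RInt f a 1) 1 M)
    as [l [Hlim Hle]]; [lra | exact HM | |].
  - intros a Ha. exists (mkposreal a (proj1 Ha)). intros y Hy Hy0.
    unfold ball in Hy; simpl in Hy; unfold AbsRing_ball, abs, minus, plus, opp in Hy; simpl in Hy.
    rewrite Ropp_0, Rplus_0_r, Rabs_right in Hy by lra.
    split; [lra | apply RInt_half_line_le_l; lra].
  - exists l. split.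
    + apply Rle_trans with (RInt f 1 1); [rewrite RInt_point; apply Rle_refl | apply Hle; lra].
    + refine (is_RInt_gen_at_point_r _ f 1 l _ Hlim).
      exists (mkposreal 1 Rlt_0_1). intros y Hy Hy0.
      unfold ball in Hy; simpl in Hy; unfold AbsRing_ball, abs, minus, plus, opp in Hy; simpl in Hy.
      rewrite Ropp_0, Rplus_0_r, Rabs_right in Hy by lra.
      apply ex_RInt_pos_half_line; lra.
Qed.

Lemma is_RInt_gen_at_pinfty M :
  (forall b, 1 <= b -> RInt f 1 b <= M) ->
  exists l, 0 < l /\ is_RInt_gen f (at_point 1) (Rbar_locally p_infty) l.
Proof.
  intros HM.
  destruct (filterlim_sup (Rbar_locally p_infty) (fun b => 1 <= b) (fun b => RInt f 1 b) 1 M)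
    as [l [Hlim Hle]]; [lra | exact HM | |].
  - intros a Ha. exists a. intros y Hy. split; [lra | apply RInt_half_line_le_r; lra].
  - exists l. split.
    + apply Rlt_le_trans with (RInt f 1 2); [|apply Hle; lra].
      apply RInt_gt_0; [lra | intros; apply f_pos; lra | intros; apply f_cont; lra].
    + refine (is_RInt_gen_at_point_l _ f 1 l _ Hlim).
      exists 1. intros y Hy. apply ex_RInt_pos_half_line; lra.
Qed.

Lemma RInt_gen_pos_half_line M0 M1 :
  (forall a, 0 < a <= 1 -> RInt f a 1 <= M0) ->
  (forall b, 1 <= b -> RInt f 1 b <= M1) ->
  0 < RInt_gen f (at_right 0) (Rbar_locally p_infty).
Proof.
  intros H0 H1.
  destruct (is_RInt_gen_at_right_0 M0 H0) as [l0 [Hl0 HI0]].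
  destruct (is_RInt_gen_at_pinfty M1 H1) as [l1 [Hl1 HI1]].
  rewrite (is_RInt_gen_unique f (plus l0 l1)).
  - simpl; unfold plus; simpl. lra.
  - exact (is_RInt_gen_Chasles f 1 l0 l1 HI0 HI1).
Qed.

End PositiveImproperIntegral.

Lemma exp_le_compat x y : x <= y -> exp x <= exp y.
Proof. intros [Hlt | ->]; [left; exact (exp_increasing _ _ Hlt) | apply Rle_refl]. Qed.

Definition Gq_integrand (q y u : R) : R := Rpower u (q - 1) * exp (- y * u - u ^ 2 / 2).

Lemma Gq_integrand_continuous q y u : 0 < u -> continuous (Gq_integrand q y) u.
Proof.
  intros Hu. apply (@ex_derive_continuous R_AbsRing R_NormedModule).
  unfold Gq_integrand, Rpower. auto_derive. lra.
Qed.

Lemma Gq_integrand_pos q y u : 0 < Gq_integrand q y u.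
Proof. apply Rmult_lt_0_compat; apply exp_pos. Qed.

Lemma is_RInt_Rpower q a b : 0 < q -> 0 < a <= b ->
  is_RInt (fun u => Rpower u (q - 1)) a b (Rpower b q / q - Rpower a q / q).
Proof.
  intros Hq Hab.
  apply (is_RInt_derive (fun u => Rpower u q / q)); intros u Hu;
    rewrite Rmin_left, Rmax_right in Hu by lra.
  - unfold Rpower. auto_derive; [lra |].
    replace ((q - 1) * ln u) with (q * ln u + - ln u) by ring.
    rewrite exp_plus, exp_Ropp, exp_ln by lra. field. lra.
  - apply (@ex_derive_continuous R_AbsRing R_NormedModule).
    unfold Rpower. auto_derive. lra.
Qed.

Lemma RInt_Gq_integrand_near_0 q y a : 0 < q -> 0 <= y -> 0 < a <= 1 ->
  RInt (Gq_integrand q y) a 1 <= / q.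
Proof.
  intros Hq Hy Ha.
  assert (Hpow := is_RInt_Rpower q a 1 Hq Ha).
  apply Rle_trans with (RInt (fun u => Rpower u (q - 1)) a 1).
  - apply RInt_le; [lra | | eexists; exact Hpow |].
    + apply (@ex_RInt_continuous R_CompleteNormedModule). intros u Hu.
      rewrite Rmin_left, Rmax_right in Hu by lra. apply Gq_integrand_continuous. lra.
    + intros u Hu. unfold Gq_integrand.
      rewrite <- (Rmult_1_r (Rpower u (q - 1))) at 2.
      apply Rmult_le_compat_l; [left; apply exp_pos |].
      rewrite <- exp_0. apply exp_le_compat. nra.
  - rewrite (is_RInt_unique _ _ _ _ Hpow).
    replace (Rpower 1 q) with 1 by (unfold Rpower; rewrite ln_1, Rmult_0_r, exp_0; reflexivity).
    assert (0 < Rpower a q / q) by (apply Rdiv_lt_0_compat; [apply exp_pos | lra]).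
    unfold Rdiv. lra.
Qed.

(* For u >= 1: (q-1) ln u <= |q-1| u, and the Gaussian factor beats the linear terms. *)
Lemma Gq_integrand_tail_bound q y u : 0 <= y -> 1 <= u ->
  Gq_integrand q y u <= exp ((Rabs (q - 1) + 1) ^ 2) * exp (- u).
Proof.
  intros Hy Hu. unfold Gq_integrand, Rpower. rewrite <- !exp_plus. apply exp_le_compat.
  set (c := Rabs (q - 1)).
  assert (Hc : 0 <= c) by apply Rabs_pos.
  assert (Hln0 : 0 <= ln u) by (rewrite <- ln_1; apply ln_le; lra).
  assert (Hlnu : ln u <= u).
  { generalize (exp_ineq1_le (ln u)). rewrite exp_ln by lra. lra. }
  assert ((q - 1) * ln u <= c * u).
  { apply Rle_trans with (c * ln u).
    - apply Rmult_le_compat_r; [lra | apply Rle_abs].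
    - apply Rmult_le_compat_l; lra. }
  assert (0 <= y * u) by nra.
  assert (0 <= (u - (c + 1)) ^ 2) by apply pow2_ge_0.
  nra.
Qed.

Lemma RInt_Gq_integrand_tail q y b : 0 <= y -> 1 <= b ->
  RInt (Gq_integrand q y) 1 b <= exp ((Rabs (q - 1) + 1) ^ 2).
Proof.
  intros Hy Hb. set (K := exp ((Rabs (q - 1) + 1) ^ 2)).
  assert (Hexp : is_RInt (fun u => K * exp (- u)) 1 b (K * exp (- 1) - K * exp (- b))).
  { replace (K * exp (-1) - K * exp (- b)) with ((- K * exp (- b)) - (- K * exp (- 1))) by ring.
    apply (is_RInt_derive (fun u => - K * exp (- u))); intros u Hu.
    - auto_derive; [exact I | ring].
    - apply (@ex_derive_continuous R_AbsRing R_NormedModule). auto_derive. exact I. }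
  apply Rle_trans with (RInt (fun u => K * exp (- u)) 1 b).
  - apply RInt_le; [lra | | eexists; exact Hexp |].
    + apply (@ex_RInt_continuous R_CompleteNormedModule). intros u Hu.
      rewrite Rmin_left, Rmax_right in Hu by lra. apply Gq_integrand_continuous. lra.
    + intros u Hu. apply Gq_integrand_tail_bound; lra.
  - rewrite (is_RInt_unique _ _ _ _ Hexp).
    assert (0 < K * exp (- b)) by (apply Rmult_lt_0_compat; apply exp_pos).
    assert (exp (- 1) <= 1) by (rewrite <- exp_0; apply exp_le_compat; lra).
    assert (0 < K) by apply exp_pos.
    nra.
Qed.

Lemma Gq_pos q y : 0 < q -> 0 <= y -> 0 < Gq q y.
Proof.
  intros Hq Hy.
  apply (RInt_gen_pos_half_line (Gq_integrand q y) (fun u Hu => Gq_integrand_continuous q y u Hu)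
           (fun u _ => Gq_integrand_pos q y u) (/ q) (exp ((Rabs (q - 1) + 1) ^ 2))).
  - intros a Ha. apply RInt_Gq_integrand_near_0; lra.
  - intros b Hb. apply RInt_Gq_integrand_tail; lra.
Qed.

Lemma FGq_Rabs q z : FGq q (Rabs z) = FGq q z.
Proof.
  unfold Rabs. destruct (Rcase_abs z); [|reflexivity].
  unfold FGq, Gq. rewrite Ropp_involutive. ring.
Qed.

Lemma rpow_sqrt_scale q c y : 0 < c ->
  rpow (sqrt c * y) q = Rpower c (q / 2) * rpow y q.
Proof.
  intros Hc. assert (Hs : 0 < sqrt c) by (apply sqrt_lt_R0; exact Hc).
  unfold rpow. destruct (Rle_dec y 0) as [Hy | Hy].
  - destruct (Rle_dec (sqrt c * y) 0) as [_ | Hsy]; [ring | exfalso; nra].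
  - destruct (Rle_dec (sqrt c * y) 0) as [Hsy | _]; [exfalso; nra |].
    rewrite <- Rpower_mult_distr by lra.
    rewrite <- Rpower_sqrt, Rpower_mult by exact Hc.
    f_equal. f_equal. field.
Qed.

(* A zero denominator would make the defining equation of D^* read q = 0, since x / 0 = 0. *)
Lemma FGq_neq0_of_Dstar q D : 0 < q -> Dstar_eq q D -> FGq q D <> 0.
Proof.
  intros Hq HD H0. unfold Dstar_eq in HD. rewrite H0 in HD.
  unfold Rdiv in HD. rewrite Rinv_0, Rmult_0_r in HD. lra.
Qed.

Lemma wfun_at_D q D : FGq q D <> 0 -> wfun q D D = 0.
Proof.
  intros HF. unfold wfun.
  replace (rpow D q * FGq q D / FGq q D - rpow D q) with 0 by (field; exact HF).
  ring.
Qed.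

Lemma Gq_mul_wfun q D A : Gq q A <> 0 ->
  Gq q A * wfun q D A = rpow D q * FGq q A / FGq q D - rpow A q.
Proof. intros HG. unfold wfun. rewrite <- Rmult_assoc, Rinv_r, Rmult_1_l by exact HG. reflexivity. Qed.

Lemma hfun_inside q D t x : t < 1 -> Rabs x < D * sqrt (1 - t) ->
  hfun q D t x = Rpower (1 - t) (q / 2) *
    (rpow D q * FGq q (Rabs x / sqrt (1 - t)) / FGq q D - rpow (Rabs x / sqrt (1 - t)) q).
Proof.
  intros Ht Hx. assert (Hs : 0 < sqrt (1 - t)) by (apply sqrt_lt_R0; lra).
  unfold hfun, Ubar. destruct (Rlt_dec (Rabs x) (D * sqrt (1 - t))) as [_ | Hn]; [|contradiction].
  assert (Hscale : rpow (Rabs x) q = Rpower (1 - t) (q / 2) * rpow (Rabs x / sqrt (1 - t)) q).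
  { rewrite <- rpow_sqrt_scale by lra. f_equal. field. lra. }
  assert (HF : FGq q (Rabs x / sqrt (1 - t)) = FGq q (x / sqrt (1 - t))).
  { rewrite <- (FGq_Rabs q (x / sqrt (1 - t))), Rabs_div, (Rabs_pos_eq (sqrt (1 - t))) by lra. reflexivity. }
  rewrite HF, Hscale. unfold Rdiv. ring.
Qed.

Theorem lemma5p3 (q Ds As : R) :
  0 < q ->
  (* Ds = D^*, the unique positive root *)
  0 < Ds -> Dstar_eq q Ds ->
  (forall D, 0 < D -> Dstar_eq q D -> D = Ds) ->
  (* As = A^*, the unique maximizer of w over [0, D^*] *)
  0 <= As <= Ds ->
  (forall A, 0 <= A <= Ds -> wfun q Ds A <= wfun q Ds As) ->
  (forall A, 0 <= A <= Ds -> wfun q Ds As <= wfun q Ds A -> A = As) ->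
  forall t x : R, 0 <= t < 1 ->
    Wstar q Ds As t x >= hfun q Ds t x.
Proof.
  intros Hq HD HDeq _ HA Hmax _ t x Ht.
  set (s := sqrt (1 - t)). assert (Hs : 0 < s) by (apply sqrt_lt_R0; lra).
  set (P := Rpower (1 - t) (q / 2)). assert (HP : 0 < P) by apply exp_pos.
  set (y := Rabs x / s).
  unfold Wstar. fold s P y.
  destruct (Rlt_dec (As * s) (Rabs x)) as [Hfar | _]; [|apply Rge_refl].
  assert (HAy : As < y) by (apply Rmult_lt_reg_r with s; [exact Hs | unfold y; field_simplify; lra]).
  assert (HG : 0 < Gq q y) by (apply Gq_pos; lra).
  apply Rle_ge. rewrite Rmult_assoc.
  destruct (Rlt_dec (Rabs x) (Ds * s)) as [Hin | Hout].
  - rewrite hfun_inside by (fold s; lra). fold s y P.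
    rewrite <- Gq_mul_wfun by lra.
    apply Rmult_le_compat_l; [lra|]. apply Rmult_le_compat_l; [lra|].
    apply Hmax. split; [lra|]. apply Rmult_le_reg_r with s; [exact Hs|]. unfold y. field_simplify; lra.
  - unfold hfun. fold s. destruct (Rlt_dec (Rabs x) (Ds * s)) as [Hin | _]; [contradiction|].
    assert (Hw0 : 0 <= wfun q Ds As).
    { rewrite <- (wfun_at_D q Ds) by exact (FGq_neq0_of_Dstar q Ds Hq HDeq). apply Hmax. lra. }
    apply Rmult_le_pos; [lra | apply Rmult_le_pos; lra].
Qed.
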